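(* Let $G=(V,E)$ be an undirected multigraph, $0\le\delta\le1/3$, and $A\subseteq V$. Let $S\subseteq V$ cross $A$ and let $\lambda=w(S,V\setminus S)$. Suppose $w(S\cap A,A\setminus S)\le\lambda/2$ and $S\cap A$ is not $(1-\delta)$-boundary sparse in $A$. Let $X\in\{S\cap A,A\setminus S\}$ satisfy $w(X,V\setminus A)=\min\{w(S\cap A,V\setminus A),w(A\setminus S,V\setminus A)\}$. Then $w(X,V\setminus X)\le(1+\tfrac{3\delta}{4})\lambda$.
   Context: $w(P,Q)$ is the number of edges (with multiplicity) between disjoint sets $P$ and $Q$. $S$ crosses $A$ if $S\cap A$ and $A\setminus S$ are both nonempty. For $C\subseteq V$, a set $U\subsetneq C$ is $(1-\delta)$-boundary sparse in $C$ if $w(U,C\setminus U)<(1-\delta)\min\{w(U,V\setminus C),\,w(C\setminus U,V\setminus C)\}$. *)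

From HB Require Import structures.
From mathcomp Require Import all_boot all_order all_algebra.
Set Implicit Arguments. Unset Strict Implicit. Unset Printing Implicit Defensive.
Import Order.TTheory GRing.Theory Num.Theory.

(* An undirected multigraph on the finite vertex set T is given by a
   symmetric multiplicity function e : T -> T -> nat
   (e u v = number of edges between u and v). *)
Definition symmetric_mult (T : finType) (e : T -> T -> nat) : Prop :=
  forall u v, e u v = e v u.

Definition wcut (T : finType) (e : T -> T -> nat) (P Q : {set T}) : nat :=
  \sum_(u in P) \sum_(v in Q) e u v.

Definition crosses (T : finType) (S A : {set T}) : Prop :=
  S :&: A != set0 /\ A :\: S != set0.

Definition boundary_sparse (R : realFieldType) (T : finType)
    (e : T -> T -> nat) (delta : R) (C U : {set T}) : Prop :=
  U \proper C /\
  ((wcut e U (C :\: U))%:R <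
     (1 - delta) * Num.min (wcut e U (~: C))%:R (wcut e (C :\: U) (~: C))%:R)%R.

(* Splitting the boundary of X at A gives w(X, V \ X) = w(S ∩ A, A \ S) + w(X, V \ A).
   The first term is at most λ/2 by hypothesis, and since S ∩ A is not boundary sparse
   it bounds the second from below: (1 - δ) w(X, V \ A) <= w(S ∩ A, A \ S). Hence
   (1 - δ) w(X, V \ X) <= (1 - δ/2) λ, and (1 - δ/2) <= (1 - δ)(1 + 3δ/4) exactly when
   δ (1 - 3δ) >= 0. *)
From HB Require Import structures.
From mathcomp Require Import all_boot all_order all_algebra.
From mathcomp Require Import lra.
Set Implicit Arguments. Unset Strict Implicit. Unset Printing Implicit Defensive.
Import Order.TTheory GRing.Theory Num.Theory.
Local Open Scope ring_scope.

Section Cuts.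

Variables (T : finType) (e : T -> T -> nat).

Lemma wcut_splitr (D P Q : {set T}) :
  wcut e P Q = (wcut e P (Q :&: D) + wcut e P (Q :\: D))%N.
Proof. by rewrite /wcut -big_split; apply: eq_bigr => u _; apply: big_setID. Qed.

Lemma wcutC (P Q : {set T}) : symmetric_mult e -> wcut e P Q = wcut e Q P.
Proof.
move=> esym; rewrite /wcut exchange_big.
by apply: eq_bigr => v _; apply: eq_bigr => u _; apply: esym.
Qed.

Lemma wcut_setC_sub (A X : {set T}) : X \subset A ->
  wcut e X (~: X) = (wcut e X (A :\: X) + wcut e X (~: A))%N.
Proof.
move=> XA; rewrite (wcut_splitr A) setIC -setDE.
by rewrite [~: X :\: A]setDE -setCU (setUidPr XA).
Qed.

Lemma wcut_setC_side (S A X : {set T}) : symmetric_mult e ->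
  X = S :&: A \/ X = A :\: S ->
  wcut e X (~: X) = (wcut e (S :&: A) (A :\: S) + wcut e X (~: A))%N.
Proof.
move=> esym [->|->].
- by rewrite (wcut_setC_sub (subsetIr S A)) setDIr setDv setU0.
- rewrite (wcut_setC_sub (subsetDl A S)) setDDr setDv set0U setIC.
  by rewrite [wcut e (A :\: S) _]wcutC.
Qed.

Lemma crosses_properI (S A : {set T}) : crosses S A -> S :&: A \proper A.
Proof. by case=> _; rewrite setD_eq0; apply: properIr. Qed.

Lemma not_boundary_sparseP (R : realFieldType) (delta : R) (C U : {set T}) :
  U \proper C -> ~ boundary_sparse e delta C U ->
  (1 - delta) * Num.min (wcut e U (~: C))%:R (wcut e (C :\: U) (~: C))%:R
    <= (wcut e U (C :\: U))%:R.
Proof. by move=> UC not_sparse; rewrite leNgt; apply/negP => lt; apply: not_sparse. Qed.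

End Cuts.

Lemma cut_bound_arith (R : realFieldType) (delta p m L : R) :
  0 <= delta -> delta <= 1 / 3 -> 0 <= m ->
  p <= L / 2 -> (1 - delta) * m <= p ->
  p + m <= (1 + 3 * delta / 4) * L.
Proof.
move=> d0 d13 m0 pL mp.
have d1 : 0 < 1 - delta by lra.
have L0 : 0 <= L by have := mulr_ge0 (ltW d1) m0; lra.
rewrite -(ler_pM2l d1).
have : 0 <= delta * (1 - 3 * delta) * L by rewrite !mulr_ge0 //; lra.
have : 0 <= delta * (L / 2 - p) by rewrite mulr_ge0 //; lra.
nra.
Qed.

Theorem mainTheorem9 (R : realFieldType) (T : finType) (e : T -> T -> nat)
    (delta : R) (A S X : {set T}) :
  symmetric_mult e ->
  0 <= delta -> delta <= 1 / 3 ->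
  crosses S A ->
  (wcut e (S :&: A) (A :\: S))%:R <= (wcut e S (~: S))%:R / 2 :> R ->
  ~ boundary_sparse e delta A (S :&: A) ->
  (X = S :&: A \/ X = A :\: S) ->
  wcut e X (~: A) = minn (wcut e (S :&: A) (~: A)) (wcut e (A :\: S) (~: A)) ->
  (wcut e X (~: X))%:R <= (1 + 3 * delta / 4) * (wcut e S (~: S))%:R.
Proof.
move=> esym d0 d13 SA pL not_sparse hX hmin.
have := not_boundary_sparseP (crosses_properI SA) not_sparse.
rewrite setDIr setDv setU0 -natr_min minEnat -hmin => mp.
by rewrite (wcut_setC_side esym hX) natrD cut_bound_arith.
Qed.
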